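(* The language $\bigcup_{w\in\{0,1\}^*}(w \,\text{ш}\, w \,\text{ш}\, w)$ is not context-free.
   Context: For words $x,y$, the (ordinary) shuffle $x \,\text{ш}\, y$ is the finite set of all words $z = x_1y_1x_2y_2\cdots x_ny_n$ for some $n\ge 1$ and words $x_1,\dots,x_n,y_1,\dots,y_n$ (possibly empty) with $x=x_1\cdots x_n$ and $y=y_1\cdots y_n$. It is extended to languages by $L_1\,\text{ш}\,L_2=\bigcup_{x\in L_1,y\in L_2}(x\,\text{ш}\,y)$, so $w\,\text{ш}\,w\,\text{ш}\,w = (w\,\text{ш}\,w)\,\text{ш}\,\{w\}$. *)

From Stdlib Require Import Relations.Relation_Operators List.
From mathcomp Require Import all_boot.
Set Implicit Arguments. Unset Strict Implicit. Unset Printing Implicit Defensive.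

Notation word := (seq bool).

Inductive shuffle {T : Type} : seq T -> seq T -> seq T -> Prop :=
| shuffle_nil : shuffle [::] [::] [::]
| shuffle_l a x y z : shuffle x y z -> shuffle (a :: x) y (a :: z)
| shuffle_r a x y z : shuffle x y z -> shuffle x (a :: y) (a :: z).

(* The language  U_{w in {0,1}^*} (w ш w ш w) = U_w ((w ш w) ш {w}). *)
Definition triple_shuffle_lang (z : word) : Prop :=
  exists w u : word, shuffle w w u /\ shuffle u w z.

Record cfg (T : Type) := CFG {
  nonterm : finType;
  start : nonterm;
  rules : seq (nonterm * seq (nonterm + T))
}.

Inductive cfg_step (T : Type) (G : cfg T) :
  seq (nonterm G + T) -> seq (nonterm G + T) -> Prop :=
| cfg_step_rule (s1 s2 : seq (nonterm G + T)) (A : nonterm G) rhs :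
    List.In (A, rhs) (rules G) ->
    @cfg_step T G (s1 ++ inl A :: s2) (s1 ++ rhs ++ s2).

Definition cfg_lang (T : Type) (G : cfg T) (w : seq T) : Prop :=
  clos_refl_trans _ (@cfg_step T G) [:: inl (start G)] (map inr w).

Definition context_free (T : Type) (L : seq T -> Prop) : Prop :=
  exists G : cfg T, forall w, L w <-> cfg_lang G w.

(* A tree
   taller than the number of nonterminals contains a loop B =>* v B y inside a
   subtree of bounded height; either v y is nonempty, and the loop can be
   iterated, or cutting it out yields a strictly smaller tree for the same
   word.  Starting from a tree with the fewest nodes gives the pumping lemma.

   A word of L has a number of ones divisible by 3,
   and if it starts with a one then each prefix P satisfies
   3 * zeros P <= ones P * zeros z, because P is an interleaving of three
   prefixes of the same word w, which starts with a one.  Pumping the witness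
   (1 0^p)^3 violates one of these two invariants. *)
From Stdlib Require Import Relations.Relation_Operators List.
From mathcomp Require Import all_boot zify.
Set Implicit Arguments. Unset Strict Implicit. Unset Printing Implicit Defensive.

Definition wpow (T : Type) (i : nat) (v : seq T) : seq T := flatten (nseq i v).

Lemma wpowSr (T : Type) i (v : seq T) : wpow i.+1 v = wpow i v ++ v.
Proof.
elim: i => [|i IH]; first by rewrite /wpow /= cats0.
have -> : wpow i.+2 v = v ++ wpow i.+1 v by [].
by rewrite {1}IH catA.
Qed.

Section DerivationTrees.

Variables (T : Type) (G : cfg T).

Local Notation symbol := (nonterm G + T)%type.
Local Notation derives := (clos_refl_trans _ (@cfg_step T G)).

Inductive tree : symbol -> seq T -> nat -> nat -> Prop :=
| leaf a : tree (inr a) [:: a] 0 1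
| node A rhs w h s :
    List.In (A, rhs) (rules G) -> forest rhs w h s -> tree (inl A) w h.+1 s.+1
with forest : seq symbol -> seq T -> nat -> nat -> Prop :=
| forest_nil : forest [::] [::] 0 0
| forest_cons X xs w1 w2 h1 h2 s1 s2 : tree X w1 h1 s1 -> forest xs w2 h2 s2 ->
    forest (X :: xs) (w1 ++ w2) (maxn h1 h2) (s1 + s2).

Scheme tree_ind2 := Minimality for tree Sort Prop
  with forest_ind2 := Minimality for forest Sort Prop.
Combined Scheme tree_forest_ind from tree_ind2, forest_ind2.

(* [ctx X u B z m]: a derivation tree from X with m nodes in which exactly one
   leaf is left open, labelled by the nonterminal B; its frontier is u B z. *)
Inductive ctx : symbol -> seq T -> nonterm G -> seq T -> nat -> Prop :=
| hole B : ctx (inl B) [::] B [::] 0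
| ctx_node A rhs u B z m :
    List.In (A, rhs) (rules G) -> ctx_forest rhs u B z m -> ctx (inl A) u B z m.+1
with ctx_forest : seq symbol -> seq T -> nonterm G -> seq T -> nat -> Prop :=
| ctx_here X xs u B z m w h s : ctx X u B z m -> forest xs w h s ->
    ctx_forest (X :: xs) u B (z ++ w) (m + s)
| ctx_there X xs w h s u B z m : tree X w h s -> ctx_forest xs u B z m ->
    ctx_forest (X :: xs) (w ++ u) B z (s + m).

Scheme ctx_ind2 := Minimality for ctx Sort Prop
  with ctx_forest_ind2 := Minimality for ctx_forest Sort Prop.
Combined Scheme ctx_forest_mut_ind from ctx_ind2, ctx_forest_ind2.

Lemma plug X u B z m x h s : ctx X u B z m -> tree (inl B) x h s ->
  exists h', tree X (u ++ x ++ z) h' (m + s).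
Proof.
move: X u B z m x h s; suff [plug_tree _] :
    (forall X u B z m, ctx X u B z m -> forall x h s, tree (inl B) x h s ->
       exists h', tree X (u ++ x ++ z) h' (m + s)) /\
    (forall xs u B z m, ctx_forest xs u B z m -> forall x h s, tree (inl B) x h s ->
       exists h', forest xs (u ++ x ++ z) h' (m + s))
  by move=> X u B z m x h s c t; apply: plug_tree c _ _ _ t.
apply: ctx_forest_mut_ind.
- by move=> B x h s tB; exists h; rewrite cats0.
- move=> A rhs u B z m Ain _ IH x h s tB; have [h' f] := IH x h s tB.
  by exists h'.+1; rewrite addSn; apply: node Ain f.
- move=> X xs u B z m w2 h2 s2 _ IH f2 x h s tB; have [h' t] := IH x h s tB.
  by exists (maxn h' h2); move: (forest_cons t f2); rewrite -!catA addnAC.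
- move=> X xs w1 h1 s1 u B z m t1 _ IH x h s tB; have [h' f] := IH x h s tB.
  by exists (maxn h1 h'); move: (forest_cons t1 f); rewrite -!catA addnA.
Qed.

Lemma compose X u B z m u' B' z' m' : ctx X u B z m -> ctx (inl B) u' B' z' m' ->
  ctx X (u ++ u') B' (z' ++ z) (m + m').
Proof.
move: X u B z m u' B' z' m'; suff [compose_ctx _] :
    (forall X u B z m, ctx X u B z m -> forall u' B' z' m', ctx (inl B) u' B' z' m' ->
       ctx X (u ++ u') B' (z' ++ z) (m + m')) /\
    (forall xs u B z m, ctx_forest xs u B z m -> forall u' B' z' m',
       ctx (inl B) u' B' z' m' -> ctx_forest xs (u ++ u') B' (z' ++ z) (m + m'))
  by move=> X u B z m u' B' z' m' c c'; apply: compose_ctx c _ _ _ _ c'.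
apply: ctx_forest_mut_ind.
- by move=> B u' B' z' m' c; rewrite cats0.
- move=> A rhs u B z m Ain _ IH u' B' z' m' c.
  by rewrite addSn; apply: ctx_node Ain (IH _ _ _ _ c).
- move=> X xs u B z m w2 h2 s2 _ IH f2 u' B' z' m' c.
  by move: (ctx_here (IH _ _ _ _ c) f2); rewrite -catA addnAC.
- move=> X xs w1 h1 s1 u B z m t1 _ IH u' B' z' m' c.
  by move: (ctx_there t1 (IH _ _ _ _ c)); rewrite -catA addnA.
Qed.

Lemma iterate_loop B v y m i : ctx (inl B) v B y m ->
  ctx (inl B) (wpow i v) B (wpow i y) (i * m).
Proof.
move=> loop; elim: i => [|i IH]; first exact: hole.
by rewrite mulSnr {1}wpowSr; apply: compose IH loop.
Qed.

Lemma derives_in_context a b l r : derives a b -> derives (l ++ a ++ r) (l ++ b ++ r).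
Proof.
elim=> [x y [s1 s2 A rhs Ain]|x|x y z _ IH1 _ IH2].
- by apply: rt_step; have := cfg_step_rule (l ++ s1) (s2 ++ r) Ain; rewrite -!catA.
- exact: rt_refl.
- exact: rt_trans IH1 IH2.
Qed.

Lemma forest_derives xs w h s : forest xs w h s -> derives xs (map inr w).
Proof.
move: xs w h s.
suff [_ forest_ok] : (forall X w h s, tree X w h s -> derives [:: X] (map inr w)) /\
                     (forall xs w h s, forest xs w h s -> derives xs (map inr w))
  by exact: forest_ok.
apply: tree_forest_ind.
- by move=> a; apply: rt_refl.
- move=> A rhs w h s Ain _ IH; apply: rt_trans IH; apply: rt_step.
  by have := cfg_step_rule [::] [::] Ain; rewrite /= cats0.
- exact: rt_refl.
- move=> X xs w1 w2 h1 h2 s1 s2 _ IH1 _ IH2; rewrite map_cat.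
  apply: (@rt_trans _ _ _ (map inr w1 ++ xs)).
  + by have := derives_in_context [::] xs IH1.
  + by have := derives_in_context (map inr w1) [::] IH2; rewrite !cats0.
Qed.

Lemma forest_cat_inv xs ys w h s : forest (xs ++ ys) w h s ->
  exists w1 w2 h1 s1 h2 s2, [/\ w = w1 ++ w2, forest xs w1 h1 s1 & forest ys w2 h2 s2].
Proof.
elim: xs w h s => [|X xs IH] w h s /= f.
  by exists [::], w, 0, 0, h, s; split=> //; apply: forest_nil.
inversion f as [|X' xs' w1 w2 h1 h2 s1 s2 t1 f2]; subst.
have [w3 [w4 [h3 [s3 [h4 [s4 [-> f3 f4]]]]]]] := IH _ _ _ f2.
by exists (w1 ++ w3), w4, (maxn h1 h3), (s1 + s3), h4, s4; rewrite catA; split=> //;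
  apply: forest_cons t1 f3.
Qed.

Lemma forest_cat xs ys w1 w2 h1 s1 h2 s2 : forest xs w1 h1 s1 -> forest ys w2 h2 s2 ->
  exists h s, forest (xs ++ ys) (w1 ++ w2) h s.
Proof.
move=> f1 f2; elim: f1 => [|X xs' w3 w4 h3 h4 s3 s4 t3 _ [h [s f]]]; first by exists h2, s2.
by exists (maxn h3 h), (s3 + s); rewrite -catA; apply: forest_cons t3 f.
Qed.

(* Completeness of trees: a forest for the target of a derivation yields a
   forest for its source, by replacing each rewritten nonterminal by a node. *)
Lemma derives_forest a b w : derives a b ->
  (exists h s, forest b w h s) -> exists h s, forest a w h s.
Proof.
move=> ab; elim: ab w => [x y [l r A rhs Ain]|x|x y z _ IH1 _ IH2] w //; last first.
  by move=> fz; apply: IH1; apply: IH2.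
case=> h [s /forest_cat_inv [w1 [w2 [h1 [s1 [h2 [s2 [-> fl /forest_cat_inv]]]]]]]].
case=> w3 [w4 [h3 [s3 [h4 [s4 [-> frhs fr]]]]]].
exact: forest_cat fl (forest_cons (node Ain frhs) fr).
Qed.

Lemma terminal_forest w : exists h s, forest (map inr w) w h s.
Proof.
elim: w => [|a w [h [s f]]]; first by exists 0, 0; apply: forest_nil.
by exists (maxn 0 h), (1 + s); apply: (forest_cons (leaf a) f).
Qed.

Lemma cfg_langP w : cfg_lang G w <-> exists h s, tree (inl (start G)) w h s.
Proof.
split=> [/derives_forest /(_ (terminal_forest w)) [h [s f]] | [h [s t]]].
- inversion f as [|X xs w1 w2 h1 h2 s1 s2 t f0]; subst.
  inversion f0; subst; exists h1, s1; by rewrite cats0.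
- by have := forest_derives (forest_cons t forest_nil); rewrite cats0.
Qed.

Lemma subtree_at_height :
  (forall X w h s, tree X w h s -> forall m, 0 < m <= h ->
     exists u B x z mc sx, [/\ ctx X u B z mc, tree (inl B) x m sx,
                              w = u ++ x ++ z & s = mc + sx]) /\
  (forall xs w h s, forest xs w h s -> forall m, 0 < m <= h ->
     exists u B x z mc sx, [/\ ctx_forest xs u B z mc, tree (inl B) x m sx,
                              w = u ++ x ++ z & s = mc + sx]).
Proof.
apply: tree_forest_ind.
- by move=> a m; lia.
- move=> A rhs w h s Ain f IH m /andP [m_gt0 le_mh]; have [->|ne_mh] := eqVneq m h.+1.
    by exists [::], A, w, [::], 0, s.+1; rewrite cats0; split=> //;
      [apply: hole | apply: node Ain f].
  have [|u [B [x [z [mc [sx [c t -> ->]]]]]]] := IH m; first by apply/andP; lia.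
  by exists u, B, x, z, mc.+1, sx; split=> //; apply: ctx_node Ain c.
- by move=> m; lia.
- move=> X xs w1 w2 h1 h2 s1 s2 t1 IH1 f2 IH2 m /andP [m_gt0 le_mh].
  case: (leqP m h1) => [le_mh1 | lt_h1m].
  + have [|u [B [x [z [mc [sx [c t -> ->]]]]]]] := IH1 m; first by apply/andP.
    exists u, B, x, (z ++ w2), (mc + s2), sx; rewrite -!catA addnAC.
    by split=> //; apply: ctx_here c f2.
  + have [|u [B [x [z [mc [sx [c t -> ->]]]]]]] := IH2 m; first by apply/andP; lia.
    exists (w1 ++ u), B, x, z, (s1 + mc), sx; rewrite -!catA addnA.
    by split=> //; apply: ctx_there t1 c.
Qed.

Definition fanout : nat := foldr (fun r b => maxn (size r.2) b) 2 (rules G).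

Lemma fanout_gt1 : 1 < fanout.
Proof. by rewrite /fanout; elim: (rules G) => //= r rs IH; apply: leq_trans IH (leq_maxr _ _). Qed.

Lemma rule_size_le_fanout A rhs : List.In (A, rhs) (rules G) -> size rhs <= fanout.
Proof.
rewrite /fanout; elim: (rules G) => //= r rs IH [-> | /IH]; first exact: leq_maxl.
by move/leq_trans; apply; apply: leq_maxr.
Qed.

Lemma tree_size_bound X w h s : tree X w h s -> size w <= fanout ^ h.
Proof.
have fanout_gt0 : 0 < fanout by have := fanout_gt1; lia.
move: X w h s.
suff [tree_ok _] : (forall X w h s, tree X w h s -> size w <= fanout ^ h) /\
                   (forall xs w h s, forest xs w h s -> size w <= size xs * fanout ^ h)
  by exact: tree_ok.
apply: tree_forest_ind => //.
- move=> A rhs w h s Ain _ IH; rewrite expnS; apply: leq_trans IH _.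
  by apply: leq_mul => //; apply: rule_size_le_fanout Ain.
- move=> X xs w1 w2 h1 h2 s1 s2 _ IH1 _ IH2; rewrite size_cat /= mulSn.
  apply: leq_add; first by apply: leq_trans IH1 _; apply: leq_pexp2l => //; apply: leq_maxl.
  by apply: leq_trans IH2 _; apply: leq_mul => //; apply: leq_pexp2l => //; apply: leq_maxr.
Qed.

Definition num_nonterminals : nat := #|{: nonterm G}|.

Definition has_loop A w s : Prop :=
  exists B u v x y z m1 m2 hx sx,
    [/\ ctx (inl A) u B z m1, ctx (inl B) v B y m2, 0 < m2, tree (inl B) x hx sx &
        w = u ++ v ++ x ++ y ++ z /\ s = m1 + m2 + sx].

Definition reaches (S : seq (nonterm G)) A w s : Prop :=
  exists B u z m x hx sx,
    [/\ B \in S, ctx (inl A) u B z m, tree (inl B) x hx sx, w = u ++ x ++ z & s = m + sx].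

(* Pigeonhole along a longest branch: walking down a tree of height h while
   recording the visited nonterminals in S, either a nonterminal of S is met
   again (reaches S) or the walk revisits one of its own nonterminals (a loop),
   as long as S and the branch together exceed the number of nonterminals. *)
Lemma loop_or_reaches h : forall A w s (S : seq (nonterm G)), tree (inl A) w h s ->
  uniq S -> num_nonterminals < size S + h -> has_loop A w s \/ reaches S A w s.
Proof.
elim: h => [|h IH] A w s S tA uniqS large; first by inversion tA.
have [AinS | AnotinS] := boolP (A \in S).
  by right; exists A, [::], [::], 0, w, h.+1, s; rewrite cats0; split=> //; apply: hole.
have uniqAS : uniq (A :: S) by rewrite /= AnotinS.
have AS_small : size (A :: S) <= num_nonterminals.
  by rewrite /num_nonterminals -(card_uniqP uniqAS); apply: max_card.
(* Descend into a child subtree of full height h, now recording A as visited. *)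
inversion tA as [|A' rhs w' h' s0 Ain f]; subst.
have [|u [B [x [z [m [sx [cB tB -> ->]]]]]]] := subtree_at_height.2 _ _ _ _ f h.
  by apply/andP; rewrite /= in AS_small; lia.
have cAB := ctx_node Ain cB.
have [|loopB | [B' [u' [z' [m' [x' [hx [sx' [B'in c' tB' -> ->]]]]]]]]] :=
  IH _ _ _ _ tB uniqAS; first by rewrite /=; lia.
- left; case: loopB => [C [u1 [v [x1 [y [z1 [m1 [m2 [hx [sx1 [c1 c2 m2_gt0 tC [-> ->]]]]]]]]]]]].
  exists C, (u ++ u1), v, x1, y, (z1 ++ z), (m.+1 + m1), m2, hx, sx1.
  split=> //; first exact: compose cAB c1.
  by split; [rewrite -!catA | lia].
- (* Reaching A itself closes a loop; reaching a member of S is passed up. *)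
  have cAB' := compose cAB c'; move: B'in; rewrite inE => /predU1P [eqB'A | B'inS].
    left; exists A, [::], (u ++ u'), x', (z' ++ z), [::], 0, (m.+1 + m'), hx, sx'.
    by subst B'; split=> //; [apply: hole | split; [rewrite cats0 -!catA | lia]].
  right; exists B', (u ++ u'), (z' ++ z), (m.+1 + m'), x', hx, sx'.
  by split=> //; [rewrite -!catA | lia].
Qed.

Lemma short_loop A w h s : tree (inl A) w h s -> num_nonterminals < h ->
  exists B u v x y z m1 m2 hx sx,
    [/\ ctx (inl A) u B z m1, ctx (inl B) v B y m2, 0 < m2, tree (inl B) x hx sx &
        [/\ w = u ++ v ++ x ++ y ++ z, s = m1 + m2 + sx &
            size (v ++ x ++ y) <= fanout ^ num_nonterminals.+1]].
Proof.
move=> tA tall.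
have [|u0 [A' [w1 [z0 [m0 [s1 [c0 t1 -> ->]]]]]]] :=
  subtree_at_height.1 _ _ _ _ tA num_nonterminals.+1; first exact/andP.
have [//|loop|] := @loop_or_reaches _ _ _ _ [::] t1 isT; last first.
  by case=> B [? [? [? [? [? [? []]]]]]].
case: loop => [B [u [v [x [y [z [m1 [m2 [hx [sx [c1 c2 m2_gt0 tB [ew1 ->]]]]]]]]]]]].
exists B, (u0 ++ u), v, x, y, (z ++ z0), (m0 + m1), m2, hx, sx.
split=> //; [exact: compose c0 c1 | split; [by rewrite ew1 -!catA | lia |]].
apply: leq_trans (tree_size_bound t1); rewrite ew1 !size_cat; lia.
Qed.

Lemma pumping : exists P, forall w, cfg_lang G w -> P <= size w ->
  exists u v x y z, [/\ w = u ++ v ++ x ++ y ++ z, size (v ++ x ++ y) <= P,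
    0 < size (v ++ y) & forall i, cfg_lang G (u ++ wpow i v ++ x ++ wpow i y ++ z)].
Proof.
exists (fanout ^ num_nonterminals.+1) => w /cfg_langP [h [s t]] long_w.
have [n] := ubnP s; elim: n => // n IHn in h s t *; rewrite ltnS => le_sn.
have tall : num_nonterminals < h.
  by rewrite -(leq_exp2l _ _ fanout_gt1); apply: leq_trans long_w (tree_size_bound t).
have [B [u [v [x [y [z [m1 [m2 [hx [sx [c1 c2 m2_gt0 tB [ew es short]]]]]]]]]]]] :=
  short_loop t tall.
have [vy_nil | vy_nonempty] := posnP (size (v ++ y)).
  have [v_nil y_nil] : v = [::] /\ y = [::].
    by move: vy_nil; rewrite size_cat; case: (v); case: (y).
  have [h' t'] := plug c1 tB.
  by apply: (IHn h' (m1 + sx)); [rewrite ew v_nil y_nil | lia].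
exists u, v, x, y, z; split=> // i; apply/cfg_langP.
have [h' t'] := plug (compose c1 (iterate_loop i c2)) tB.
by exists h', (m1 + i * m2 + sx); rewrite -!catA in t'.
Qed.

End DerivationTrees.

Local Notation ones s := (count_mem true s).
Local Notation zeros s := (count_mem false s).

Lemma zeros_add_ones (s : word) : zeros s + ones s = size s.
Proof. by elim: s => [|[] s IH] //=; rewrite /= in IH *; lia. Qed.

Lemma shuffle_count (T : eqType) (x y z : seq T) a :
  shuffle x y z -> count_mem a z = count_mem a x + count_mem a y.
Proof. by elim=> //= b x' y' z' _ ->; lia. Qed.

Lemma shuffle_cons_inv (T : Type) (x y z : seq T) a : shuffle x y (a :: z) ->
  (exists x', x = a :: x' /\ shuffle x' y z) \/ (exists y', y = a :: y' /\ shuffle x y' z).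
Proof. by move=> sh; inversion sh; subst; [left | right]; eexists. Qed.

Lemma shuffle_prefix (T : Type) (P Q : seq T) x y : shuffle x y (P ++ Q) ->
  exists x1 x2 y1 y2, [/\ x = x1 ++ x2, y = y1 ++ y2 & shuffle x1 y1 P].
Proof.
elim: P x y => [|a P IH] x y /= sh.
  by exists [::], x, [::], y; split=> //; apply: shuffle_nil.
case: (shuffle_cons_inv sh) => [[x' [-> /IH]] | [y' [-> /IH]]].
- case=> x1 [x2 [y1 [y2 [-> -> sh1]]]].
  by exists (a :: x1), x2, y1, y2; split=> //; apply: shuffle_l.
- case=> x1 [x2 [y1 [y2 [-> -> sh1]]]].
  by exists x1, x2, (a :: y1), y2; split=> //; apply: shuffle_r.
Qed.

Lemma shuffle_cat (T : Type) (x y : seq T) : shuffle x y (x ++ y).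
Proof.
elim: x => [|a x IH] /=; last exact: shuffle_l.
by elim: y => [|b y IHy]; [apply: shuffle_nil | apply: shuffle_r].
Qed.

(* A nonempty prefix of a word starting with a one contains a one, and no more
   zeros than the whole word. *)
Lemma zeros_prefix_le (w p q : word) : head false w -> w = p ++ q ->
  zeros p <= ones p * zeros w.
Proof.
by case: p => [|a p] //= + ew; rewrite {}ew /= => ->; rewrite /= count_cat; nia.
Qed.

Lemma lang_ones_div3 z : triple_shuffle_lang z -> 3 %| ones z.
Proof.
case=> w [u [sh_u sh_z]]; rewrite (shuffle_count _ sh_z) (shuffle_count _ sh_u).
by apply/dvdnP; exists (ones w); lia.
Qed.

(* In a word z of L starting with a one, every prefix P satisfies
   3 * zeros P <= ones P * zeros z: P interleaves three prefixes of the word w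
   with z in w ш w ш w, and w itself starts with a one. *)
Lemma lang_prefix_bound z P Q : triple_shuffle_lang z -> head false z -> z = P ++ Q ->
  3 * zeros P <= ones P * zeros z.
Proof.
case=> w [u [sh_u sh_z]] z_head ez.
have w_head : head false w.
  case: z ez sh_z z_head => [|a z'] // _ sh_z /= a_true.
  case: (shuffle_cons_inv sh_z) => [[u' [eu _]] | [w' [-> _]]] //.
  by rewrite eu in sh_u; case: (shuffle_cons_inv sh_u) => [[w' [-> _]] | [w' [-> _]]].
have zeros_z : zeros z = 3 * zeros w.
  by rewrite (shuffle_count _ sh_z) (shuffle_count _ sh_u); lia.
rewrite ez in sh_z; have [u1 [u2 [w3 [w3' [eu ew3 sh1]]]]] := shuffle_prefix sh_z.
rewrite eu in sh_u; have [w1 [w1' [w2 [w2' [ew1 ew2 sh2]]]]] := shuffle_prefix sh_u.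
have := zeros_prefix_le w_head ew1.
have := zeros_prefix_le w_head ew2.
have := zeros_prefix_le w_head ew3.
rewrite (shuffle_count _ sh1) (shuffle_count _ sh2) (shuffle_count true sh1).
rewrite (shuffle_count true sh2) zeros_z; nia.
Qed.

Definition block (p : nat) : word := true :: nseq p false.
Definition witness (p : nat) : word := block p ++ block p ++ block p.

Lemma witness_in_lang p : triple_shuffle_lang (witness p).
Proof.
exists (block p), (block p ++ block p); split; first exact: shuffle_cat.
by rewrite /witness catA; apply: shuffle_cat.
Qed.

Lemma ones_block p : ones (block p) = 1.
Proof. by rewrite /= count_nseq mul0n. Qed.

Lemma zeros_block p : zeros (block p) = p.
Proof. by rewrite /= count_nseq mul1n. Qed.

Lemma ones_witness p : ones (witness p) = 3.
Proof. by rewrite !count_cat ones_block. Qed.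

Lemma zeros_witness p : zeros (witness p) = 3 * p.
Proof. by rewrite !count_cat zeros_block; lia. Qed.

Lemma size_witness p : size (witness p) = 3 * p + 3.
Proof. by rewrite !size_cat /= size_nseq; lia. Qed.

Lemma ones_take_block p r k : ones (take k (block p ++ r)) = (0 < k) + ones (take (k - p.+1) r).
Proof.
case: k => [|k]; first by rewrite take0 !sub0n take0.
rewrite /= subSS; congr (_ + _); elim: p k => [|p IH] [|k] //=.
- by rewrite sub0n take0.
- by rewrite subSS IH.
Qed.

(* The ones of the witness sit at positions 0, p+1 and 2p+2. *)
Lemma ones_take_witness p k :
  ones (take k (witness p)) = (0 < k) + (p.+1 < k) + (p.*2.+2 < k).
Proof.
rewrite /witness !ones_take_block -[block p]cats0 ones_take_block /= addn0.
by rewrite -subnDA !subn_gt0 addnn doubleS addnA.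
Qed.


Lemma head_pump (u v x y t : word) : ones v = 0 -> ones y = 0 ->
  head false (u ++ v ++ x ++ y ++ t) -> head false (u ++ (v ++ v) ++ x ++ (y ++ y) ++ t).
Proof.
by case: u => [|a u] //; case: v => [|[] v] //; case: x => [|b x] //; case: y => [|[] y].
Qed.

Section PumpingTheWitness.

Variables (p : nat) (u v x y t : word).
Hypothesis split_witness : witness p = u ++ v ++ x ++ y ++ t.
Hypothesis short_window : size (v ++ x ++ y) <= p.
Hypothesis nonempty_loop : 0 < size (v ++ y).

Lemma window_ones : ones (v ++ x ++ y) <= 1.
Proof.
have o1 := ones_take_witness p (size u).
have o2 := ones_take_witness p (size (u ++ v ++ x ++ y)).
rewrite split_witness take_size_cat // in o1.
rewrite split_witness !catA take_size_cat // in o2.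
move: short_window; rewrite !size_cat !count_cat in o1 o2 *; lia.
Qed.

(* If the loop contains a one, pumping down leaves two ones. *)
Lemma pump_down_one : 0 < ones (v ++ y) -> ~ triple_shuffle_lang (u ++ x ++ t).
Proof.
move=> one_in_loop /lang_ones_div3; have := ones_witness p; have := window_ones.
rewrite split_witness !count_cat in one_in_loop *.
by move=> window three; have -> : ones u + (ones x + ones t) = 2 by lia.
Qed.

(* A loop of zeros behind the first block: pumping down leaves fewer than
   3p zeros behind the prefix 1 0^p. *)
Lemma pump_down_long_prefix : ones (v ++ y) = 0 -> p < size u ->
  ~ triple_shuffle_lang (u ++ x ++ t).
Proof.
move=> no_one long_u lang.
have prefix_u : take p.+1 u = block p.
  have := congr1 (take p.+1) split_witness; rewrite takel_cat // => <-.
  have size_block : size (block p) = p.+1 by rewrite /= size_nseq.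
  by rewrite /witness (take_size_cat _ size_block).
have e : u ++ x ++ t = block p ++ (drop p.+1 u ++ x ++ t).
  by rewrite -prefix_u -[in LHS](cat_take_drop p.+1 u) -catA.
have := lang_prefix_bound lang _ e; rewrite zeros_block ones_block {1}e => /(_ isT).
have := zeros_witness p; have := zeros_add_ones v; have := zeros_add_ones y.
move: nonempty_loop no_one; rewrite split_witness !count_cat !size_cat; lia.
Qed.

(* A loop of zeros within the first two blocks: pumping up adds zeros before
   the second one without adding ones. *)
Lemma pump_up_short_prefix : ones (v ++ y) = 0 -> size u <= p ->
  ~ triple_shuffle_lang (u ++ (v ++ v) ++ x ++ (y ++ y) ++ t).
Proof.
move=> no_one short_u lang; set k := size (u ++ v ++ x ++ y).
have k_small : k <= p.*2.+2 by move: short_window; rewrite /k !size_cat; lia.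
set m := take (p.*2.+2 - k) t.
have take_prefix : take p.*2.+2 (witness p) = u ++ v ++ x ++ y ++ m.
  have size_uvxy : size (((u ++ v) ++ x) ++ y) = k by rewrite /k !catA.
  by rewrite -(subnKC k_small) takeD split_witness !catA take_size_cat // drop_size_cat // -!catA.
have ones_prefix := ones_take_witness p p.*2.+2; rewrite take_prefix in ones_prefix.
have size_prefix : size (u ++ v ++ x ++ y ++ m) = p.*2.+2.
  by rewrite -take_prefix size_takel // size_witness; lia.
have e : u ++ (v ++ v) ++ x ++ (y ++ y) ++ t =
         (u ++ (v ++ v) ++ x ++ (y ++ y) ++ m) ++ drop (p.*2.+2 - k) t.
  by rewrite -!catA cat_take_drop.
have := lang_prefix_bound lang _ e.
have -> : head false (u ++ (v ++ v) ++ x ++ (y ++ y) ++ t).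
  by apply: head_pump; rewrite -?split_witness //; move: no_one; rewrite count_cat; lia.
have := zeros_witness p; have := zeros_add_ones (u ++ v ++ x ++ y ++ m).
have := zeros_add_ones v; have := zeros_add_ones y.
have := cat_take_drop (p.*2.+2 - k) t; rewrite -/m => et.
move: nonempty_loop no_one size_prefix ones_prefix.
rewrite split_witness -et !count_cat !size_cat; lia.
Qed.

End PumpingTheWitness.

Lemma witness_not_pumpable p u v x y t :
  witness p = u ++ v ++ x ++ y ++ t -> size (v ++ x ++ y) <= p -> 0 < size (v ++ y) ->
  triple_shuffle_lang (u ++ x ++ t) ->
  triple_shuffle_lang (u ++ (v ++ v) ++ x ++ (y ++ y) ++ t) -> False.
Proof.
move=> e short nonempty down up.
have [no_one | one_in_loop] := posnP (ones (v ++ y)); last first.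
  exact: pump_down_one e short nonempty one_in_loop down.
have [short_u | long_u] := leqP (size u) p.
- exact: pump_up_short_prefix e short nonempty no_one short_u up.
- exact: pump_down_long_prefix e short nonempty no_one long_u down.
Qed.

Theorem mainTheorem2 : ~ context_free triple_shuffle_lang.
Proof.
case=> G lang_G; have [P pumpG] := pumping G.
have long_witness : P <= size (witness P) by rewrite size_witness; lia.
have [u [v [x [y [t [e short nonempty pump]]]]]] :=
  pumpG _ ((lang_G _).1 (witness_in_lang P)) long_witness.
apply: (witness_not_pumpable e short nonempty); apply/lang_G.
- by have := pump 0; rewrite /wpow /=.
- by have := pump 2; rewrite /wpow /= !cats0.
Qed.
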